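(* Let $S$ be an entropy function for a finite set $X$, let $X'\subset X$, and let $S'$ be the restriction of $S$ to subsets of $X'$. Then $F_{S'}$ equals the image of $F_S$ under the coordinate projection $\mathbb R^X\to\mathbb R^{X'}$.
   Context: An entropy function for a finite set $X$ is a function $S:2^X\to[0,\infty)$ with $S(\emptyset)=0$, $S(A)+S(B)\ge S(A\cap B)+S(A\cup B)$ and $S(A)+S(B)\ge S(A\setminus B)+S(B\setminus A)$ for all $A,B\subseteq X$. An entanglement distribution function (EDF) for $S$ is a function $f:X\to\mathbb R$ (a vector in $\mathbb R^X$) with $\big|\sum_{x\in A}f(x)\big|\le S(A)$ for all $A\subseteq X$; $F_S\subseteq\mathbb R^X$ denotes the set of all EDFs for $S$ (the entropohedron). *)

From mathcomp Require Import all_boot all_order all_algebra.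
From mathcomp Require Import reals.
Set Implicit Arguments. Unset Strict Implicit. Unset Printing Implicit Defensive.
Import Order.TTheory GRing.Theory Num.Theory.
Local Open Scope ring_scope.

Definition entropy_function (R : realType) (T : finType) (S : {set T} -> R) : Prop :=
  S set0 = 0 /\
  (forall A, 0 <= S A) /\
  (forall A B, S (A :&: B) + S (A :|: B) <= S A + S B) /\
  (forall A B, S (A :\: B) + S (B :\: A) <= S A + S B).

Definition is_EDF (R : realType) (T : finType) (S : {set T} -> R) (f : T -> R) : Prop :=
  forall A : {set T}, `|\sum_(x in A) f x| <= S A.

Definition subT (T : finType) (Y : {set T}) : finType := {x : T | x \in Y}.

Definition restrict (R : realType) (T : finType) (Y : {set T}) (S : {set T} -> R)
  : {set subT Y} -> R := fun B => S [set val x | x in B].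

From mathcomp Require Import all_boot all_order all_algebra.
From mathcomp Require Import reals lra.

Set Implicit Arguments.
Unset Strict Implicit.
Unset Printing Implicit Defensive.
Import Order.TTheory GRing.Theory Num.Theory.
Local Open Scope ring_scope.

(* Only weak monotonicity S(A\B) + S(B\A) <= S(A) + S(B) is needed.  An EDF
   defined on the subsets of Y extends one point x at a time: the value t at x
   must satisfy -S(x ∪ A) - g(A) <= t <= S(x ∪ A) - g(A) for every A ⊆ Y, and
   every lower bound is below every upper bound because
   g(A) - g(B) = g(A\B) - g(B\A) <= S(A\B) + S(B\A) <= S(x ∪ A) + S(x ∪ B),
   so t can be taken to be the largest lower bound. *)

Definition is_EDF_on (R : realType) (T : finType) (S : {set T} -> R)
    (Y : {set T}) (g : T -> R) : Prop :=
  forall A : {set T}, A \subset Y -> `|\sum_(x in A) g x| <= S A.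

Lemma sumrB_setD (T : finType) (V : zmodType) (g : T -> V) (A B : {set T}) :
  \sum_(x in A) g x - \sum_(x in B) g x =
  \sum_(x in A :\: B) g x - \sum_(x in B :\: A) g x.
Proof.
by rewrite (big_setID B) (big_setID (A := B) A) setIC /= opprD addrACA subrr add0r.
Qed.

Lemma setU1D (T : finType) (x : T) (A B : {set T}) :
  x \notin A -> (x |: A) :\: (x |: B) = A :\: B.
Proof.
move=> xA; apply/setP => z; rewrite !inE.
by case: eqVneq => [->|] //=; rewrite (negbTE xA) andbF.
Qed.

Section Extension.

Variables (R : realType) (X : finType) (S : {set X} -> R).
Hypothesis S_weak_mono : forall A B, S (A :\: B) + S (B :\: A) <= S A + S B.

Lemma EDF_on_sumB (Y : {set X}) (x : X) (g : X -> R) (A B : {set X}) :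
  x \notin Y -> is_EDF_on S Y g -> A \subset Y -> B \subset Y ->
  \sum_(z in A) g z - \sum_(z in B) g z <= S (x |: A) + S (x |: B).
Proof.
move=> xY Hg AY BY.
have xA : x \notin A by apply: contra xY => /(subsetP AY).
have xB : x \notin B by apply: contra xY => /(subsetP BY).
apply: le_trans (S_weak_mono _ _); rewrite sumrB_setD !setU1D //.
apply: lerD; apply: le_trans (ler_norm _) _; rewrite ?normrN; apply: Hg.
  exact: subset_trans (subsetDl _ _) AY.
exact: subset_trans (subsetDl _ _) BY.
Qed.

Lemma EDF_on_value_at (Y : {set X}) (x : X) (g : X -> R) :
  x \notin Y -> is_EDF_on S Y g ->
  exists t : R, forall A : {set X},
    A \subset Y -> `|t + \sum_(z in A) g z| <= S (x |: A).
Proof.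
move=> xY Hg.
pose lower (A : {set X}) := - S (x |: A) - \sum_(z in A) g z.
have set0Y : (set0 : {set X}) \subset Y by rewrite sub0set.
exists (lower [arg max_(A > set0 | A \subset Y) lower A]%O).
case: arg_maxP => // B BY Bmax A AY.
have : lower A <= lower B := Bmax A AY.
have := EDF_on_sumB xY Hg AY BY.
by rewrite ler_norml /lower => ? ?; apply/andP; split; lra.
Qed.

Lemma EDF_on_setU1 (Y : {set X}) (x : X) (g : X -> R) :
  x \notin Y -> is_EDF_on S Y g ->
  exists f : X -> R, is_EDF_on S (x |: Y) f /\ {in Y, f =1 g}.
Proof.
move=> xY Hg; have [t Ht] := EDF_on_value_at xY Hg.
exists (fun z => if z == x then t else g z); split; last first.
  by move=> z zY; case: eqVneq zY xY => // ->->.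
have sum_g B : x \notin B ->
    \sum_(z in B) (if z == x then t else g z) = \sum_(z in B) g z.
  by move=> xB; apply: eq_bigr => z zB; case: eqVneq zB xB => // ->->.
move=> A AxY; have [xA|xA] := boolP (x \in A); last first.
  by rewrite sum_g // Hg // -(setU1K xY) subsetD1 AxY.
have AY : A :\ x \subset Y by rewrite -(setU1K xY) setSD.
by rewrite (big_setD1 _ xA) sum_g ?setD11 //= eqxx -{2}(setD1K xA) Ht.
Qed.

Lemma EDF_on_extend (Y : {set X}) (g : X -> R) :
  is_EDF_on S Y g -> exists f : X -> R, is_EDF S f /\ {in Y, f =1 g}.
Proof.
have [n] := ubnP #|~: Y|; elim: n Y g => // n IHn Y g ltYn Hg.
have [YcE|/set0Pn[x]] := eqVneq (~: Y) set0.
  exists g; split=> // A; apply: Hg.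
  by rewrite -[Y]setCK YcE setC0 subsetT.
rewrite inE => xY; have [g1 [Hg1 g1E]] := EDF_on_setU1 xY Hg.
have ltYxn : (#|~: (x |: Y)| < n)%N.
  have : ~: (x |: Y) \proper ~: Y by rewrite properC properUr // sub1set.
  by move/proper_card/leq_trans; apply.
have [f [Hf fE]] := IHn _ _ ltYxn Hg1.
by exists f; split=> // y yY; rewrite fE ?g1E // in_setU1 yY orbT.
Qed.

End Extension.

Section Restriction.

Variables (R : realType) (X : finType) (Y : {set X}) (S : {set X} -> R).

Lemma sum_imset_val (f : X -> R) (B : {set subT Y}) :
  \sum_(x in [set val y | y in B]) f x = \sum_(y in B) f (val y).
Proof. by rewrite big_imset //; apply: in2W val_inj. Qed.

Lemma imset_val_preimset (A : {set X}) :
  A \subset Y -> [set val y | y in [set y : subT Y | val y \in A]] = A.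
Proof.
move=> AY; apply/setP => x; apply/imsetP/idP => [[y]|xA].
  by rewrite inE => yA ->.
by exists (Sub x (subsetP AY x xA) : subT Y); rewrite ?inE.
Qed.

Lemma restrict_EDF (f : X -> R) (g : subT Y -> R) :
  is_EDF S f -> (forall y, g y = f (val y)) -> is_EDF (restrict S) g.
Proof.
move=> Hf gE B; under eq_bigr do rewrite gE.
by rewrite -sum_imset_val; apply: Hf.
Qed.

Lemma restrict_EDF_lift (g : subT Y -> R) :
  is_EDF (restrict S) g ->
  exists g0 : X -> R, is_EDF_on S Y g0 /\ forall y, g y = g0 (val y).
Proof.
move=> Hg; exists (fun x => oapp g 0 (insub x)).
split=> [A AY|y]; last by rewrite valK.
rewrite -(imset_val_preimset AY) sum_imset_val.
by under eq_bigr do rewrite valK; apply: Hg.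
Qed.

End Restriction.

Theorem corollary22 (R : realType) (X : finType) (Y : {set X}) (S : {set X} -> R) :
  entropy_function S ->
  forall g : subT Y -> R,
    is_EDF (restrict S) g <->
    exists f : X -> R, is_EDF S f /\ forall y : subT Y, g y = f (val y).
Proof.
move=> [_ [_ [_ S_weak_mono]]] g.
split=> [/restrict_EDF_lift[g0 [Hg0 gE]] | [f [Hf gE]]]; last exact: restrict_EDF Hf gE.
have [f [Hf fE]] := EDF_on_extend S_weak_mono Hg0.
by exists f; split=> // y; rewrite gE fE ?(valP y).
Qed.
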